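(* Let $(T,\preceq,\Sigma,\mathcal S,\mathcal M)$ be an $(\mathcal S,\mathcal M)$-tree, $n\in\omega$, and $f\in\mathcal{AM}$ with domain $T(\le n)$. Then there exists a unique $f^+\in\mathcal M$ such that $f^+\restriction T(\le n)=f$ and every $\ell\ge\tilde f(n)$ belongs to $\tilde{f^+}[\omega]$.
   Context: A tree is a partially ordered set $(T,\preceq)$ such that for every $a\in T$ the set $\{b\in T:b\prec a\}$ is finite and linearly ordered by $\preceq$. The level of $a$ is $\ell(a)=|\{b\in T:b\prec a\}|$; $T(n)=\{a\in T:\ell(a)=n\}$, and $T(\le n)$, $T(<n)$ are defined analogously. A node $b$ is an immediate successor of $a$ if $a\prec b$ and there is no $c$ with $a\prec c\prec b$. An $\mathcal S$-tree is a quadruple $(T,\preceq,\Sigma,\mathcal S)$ where $(T,\preceq)$ is a countable tree in which every node has finitely many immediate successors and $T(0)$ is finite, $\Sigma$ is a set, and $\mathcal S\colon T\times T^{<\omega}\times\Sigma\to T$ is a partial function such that: (S1) if $\mathcal S(a,\bar p,c)$ is defined then it is an immediate successor of $a$ and every entry of $\bar p$ has level at most $\ell(a)-1$; (S2) if $\mathcal S(a,\bar p,c)=\mathcal S(b,\bar q,d)$ then $a=b$, $\bar p=\bar q$ and $c=d$; (S3) for every $a\in T$ and every immediate successor $b$ of $a$ there are $\bar p\in T^{<\omega}$ and $c\in\Sigma$ with $b=\mathcal S(a,\bar p,c)$. For $S\subseteq T$, a map $f\colon S\to T$ is level-preserving if $\ell(a)=\ell(b)$ implies $\ell(f(a))=\ell(f(b))$;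 then $\tilde f(n)$ denotes $\ell(f(a))$ for any $a\in S$ with $\ell(a)=n$. An injection $F\colon T\to T$ is shape-preserving if (i) it is level-preserving; (ii) whenever $\mathcal S(a,\bar p,c)$ is defined, $\mathcal S(F(a),F(\bar p),c)$ is defined and $\mathcal S(F(a),F(\bar p),c)\preceq F(\mathcal S(a,\bar p,c))$, where $F(\bar p)$ is the tuple of images of the entries of $\bar p$; (iii) for every $a\in T(0)$ and $b\in T$ with $a\preceq b$ we have $a\preceq F(b)$. A shape-preserving $F$ skips level $m$ if $m\notin\tilde F[\omega]$, and skips only level $m$ if $\tilde F[\omega]=\omega\setminus\{m\}$. An $(\mathcal S,\mathcal M)$-tree is a quintuple $(T,\preceq,\Sigma,\mathcal S,\mathcal M)$ where $(T,\preceq,\Sigma,\mathcal S)$ is an $\mathcal S$-tree and $\mathcal M$ is a set of shape-preserving functions $T\to T$ such that: (M1) $\mathrm{Id}_T\in\mathcal M$, $\mathcal M$ is closed under composition, and whenever $(F_i)_{i\in\omega}$ is a sequence in $\mathcal M$ with $F_i\restriction T(\le i)=F_{i+1}\restriction T(\le i)$ for all $i$, there is $F_\infty\in\mathcal M$ with $F_\infty\restriction T(\le i)=F_i\restriction T(\le i)$ for all $i$; (M2) for every $n\in\omega$ and every $F\in\mathcal M$ with $\tilde F(n)>0$ which skips level $\tilde F(n)-1$, there are $F_1,F_2\in\mathcal M$ such that $F_2$ skips only level $\tilde F(n)-1$ and $(F_2\circ F_1)\restriction T(\le n)=F\restriction T(\le n)$; (M3) for all $n<m$ in $\omega$ there is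 $F^n_m\in\mathcal M$ skipping only level $m$ such that $F^n_m(b)=\mathcal S(b,\bar p,c)$ whenever $a\in T(n)$, $b\in T(m)$, $\bar p\in T^{<\omega}$, $c\in\Sigma$, $\mathcal S(a,\bar p,c)$ is defined and $\mathcal S(a,\bar p,c)\preceq b$. Notation: $\mathcal{AM}=\{F\restriction T(<k): F\in\mathcal M,\ k>0\}$. *)

From Stdlib Require Import ClassicalEpsilon.
From mathcomp Require Import all_boot.
Set Implicit Arguments. Unset Strict Implicit. Unset Printing Implicit Defensive.

Section Trees.
Variable T : countType.
Variable le : T -> T -> Prop.

Definition lt (a b : T) : Prop := le a b /\ a <> b.

Definition is_tree : Prop :=
  [/\ (forall a, le a a),
      (forall a b, le a b -> le b a -> a = b),
      (forall a b c, le a b -> le b c -> le a c),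
      (forall a, exists s : seq T, forall b, b \in s <-> lt b a)
    & (forall a b c, lt b a -> lt c a -> le b c \/ le c b)].

Definition level (a : T) : nat :=
  epsilon (inhabits 0%N)
    (fun n => exists s : seq T,
       [/\ uniq s, (forall b, b \in s <-> lt b a) & size s = n]).

Definition imm_succ (a b : T) : Prop :=
  lt a b /\ ~ (exists c, lt a c /\ lt c b).

Variable Sigma : Type.
Variable S : T -> seq T -> Sigma -> option T.

Definition is_S_tree : Prop :=
  is_tree /\ [/\
      (forall a, exists s : seq T, forall b, imm_succ a b -> b \in s),
      (exists s : seq T, forall a, level a = 0%N -> a \in s),
      (* (S1): entries of p have level <= level a - 1 (i.e. < level a) *)
      (forall a p c b, S a p c = Some b ->
          imm_succ a b /\ (forall x, x \in p -> (level x < level a)%N)),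
      (forall a b p q c d x, S a p c = Some x -> S b q d = Some x ->
          [/\ a = b, p = q & c = d])
    &
      (forall a b, imm_succ a b -> exists p c, S a p c = Some b)].

Definition level_preserving (F : T -> T) : Prop :=
  forall a b, level a = level b -> level (F a) = level (F b).

Definition tilde (F : T -> T) (n : nat) : nat :=
  epsilon (inhabits 0%N) (fun k => exists a, level a = n /\ level (F a) = k).

(* l ∈ tilde F [omega]  (tilde F is defined on the levels n with T(n) ≠ ∅) *)
Definition in_tilde_image (F : T -> T) (l : nat) : Prop :=
  exists n, (exists a, level a = n) /\ tilde F n = l.

Definition shape_preserving (F : T -> T) : Prop :=
  [/\ injective F,
      level_preserving F,
      (forall a p c b, S a p c = Some b ->
          exists b', S (F a) (map F p) c = Some b' /\ le b' (F b))
    & (forall a b, level a = 0%N -> le a b -> le a (F b))].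

Definition skips (F : T -> T) (m : nat) : Prop := ~ in_tilde_image F m.

Definition skips_only (F : T -> T) (m : nat) : Prop :=
  forall l, in_tilde_image F l <-> l <> m.

Variable M : (T -> T) -> Prop.

Definition is_SM_tree : Prop :=
  [/\ is_S_tree,
      (forall F, M F -> shape_preserving F),
      (* (M1) *)
      [/\ M id,
          (forall F G, M F -> M G -> M (F \o G))
        & (forall Fs : nat -> T -> T, (forall i, M (Fs i)) ->
            (forall i a, (level a <= i)%N -> Fs i a = Fs i.+1 a) ->
            exists Finf, M Finf /\
              (forall i a, (level a <= i)%N -> Finf a = Fs i a))],
      (* (M2) *)
      (forall n F, M F -> (0 < tilde F n)%N -> skips F (tilde F n).-1 ->
         exists F1 F2, [/\ M F1, M F2, skips_only F2 (tilde F n).-1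
           & forall a, (level a <= n)%N -> F2 (F1 a) = F a])
    & (* (M3) *)
      (forall n m, (n < m)%N -> exists F, [/\ M F, skips_only F m
         & forall a b p c x, level a = n -> level b = m ->
             S a p c = Some x -> le x b -> S b p c = Some (F b)])].

End Trees.

(* Shape-preserving maps are rigid: a node a at level j+1 is S(b, p, c) for
   its parent b and some tuple p of lower nodes, and F a lies above
   S(F b, F p, c), one level above F b.  So once the level map of F is known,
   F is determined level by level by its values on lower levels.  Hence two
   maps in M that agree on T(<= n) and whose level maps have no gaps above n
   coincide, which gives uniqueness.  For existence, a gap at level N+1 is
   closed with (M2): factoring G as F2 o F1 on T(<= N+1), where F2 skips only
   level t-1 (t the level of G on T(N+1)), F2 is the identity below level t-1,
   so F1 agrees with G on T(<= N) and lowers level N+1 by one.  Closing the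
   gaps at levels n+1, n+2, ... gives a coherent sequence whose limit (M1) is
   the required map. *)

From Stdlib Require Import ClassicalEpsilon FunctionalExtensionality.
From mathcomp Require Import all_boot zify.
Set Implicit Arguments. Unset Strict Implicit. Unset Printing Implicit Defensive.

Section StrictlyIncreasing.
Variable f : nat -> nat.
Hypothesis f_incr : forall j, f j < f j.+1.

Lemma incr_ltn : {homo f : i j / i < j}.
Proof. exact: homo_ltn ltn_trans f_incr. Qed.

Lemma incr_leq : {homo f : i j / i <= j}.
Proof. exact: homo_leq leqnn leq_trans (fun j => ltnW (f_incr j)). Qed.

Lemma leq_incr j : j <= f j.
Proof. by elim: j => // j IH; apply: leq_ltn_trans IH (f_incr j). Qed.

Lemma incr_succ_of_onto n :
  (forall l, f n <= l -> exists i, f i = l) ->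
  forall j, n <= j -> f j.+1 = (f j).+1.
Proof.
move=> onto j le_nj; apply/eqP; rewrite eqn_leq f_incr andbT.
have [k fk] := onto (f j).+1 (leq_trans (incr_leq le_nj) (leqnSn _)).
have lt_jk : j < k by rewrite ltnNge; apply/negP => /incr_leq; rewrite fk ltnn.
by rewrite -fk incr_leq.
Qed.

Section SkipOnly.
Variable m : nat.
Hypothesis f_image : forall l, (exists i, f i = l) <-> l <> m.

Lemma skip_only_below j : j < m -> f j = j.
Proof.
elim/ltn_ind: j => j IH lt_jm.
have [i fi] : exists i, f i = j by apply/f_image => ejm; rewrite ejm ltnn in lt_jm.
case: (ltngtP i j) => [lt_ij | lt_ji | eij]; last by subst i.
- by have := IH i lt_ij (ltn_trans lt_ij lt_jm); rewrite fi => eij; rewrite eij ltnn in lt_ij.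
- by have := leq_incr j; have := incr_ltn lt_ji; rewrite fi; lia.
Qed.

Lemma skip_only_succ_inv k : f k = m.+1 -> k = m.
Proof.
have gt_fm : m < f m.
  rewrite ltn_neqAle leq_incr andbT eq_sym; apply/eqP => fm.
  by apply: (proj1 (f_image m)) => //; exists m.
move=> fk; case: (ltngtP k m) => [lt_km | lt_mk | //].
- by have := skip_only_below lt_km; rewrite fk => ek; rewrite -ek ltnNge leqnSn in lt_km.
- by have := incr_ltn lt_mk; rewrite fk; lia.
Qed.

End SkipOnly.
End StrictlyIncreasing.

Lemma onto_of_succ (f : nat -> nat) n :
  (forall j, n <= j -> f j.+1 = (f j).+1) ->
  forall l, f n <= l -> exists i, f i = l.
Proof.
move=> f_succ l le_l; exists (n + (l - f n)).
suff -> : forall i, f (n + i) = (f n + i) by rewrite subnKC.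
by elim=> [|i IH]; rewrite ?addn0 // addnS f_succ ?leq_addr // IH addnS.
Qed.

Lemma seq_argmax (A : eqType) (g : A -> nat) (s : seq A) : s != [::] ->
  exists2 x, x \in s & forall y, y \in s -> g y <= g x.
Proof.
elim: s => // x s IH _; case: (eqVneq s [::]) => [-> | /IH [z zs zmax]].
  by exists x; rewrite ?inE // => y /[!inE] /eqP ->.
case: (leqP (g x) (g z)) => h.
  by exists z; rewrite ?inE ?zs ?orbT // => y /[1!inE] /predU1P [-> | /zmax].
exists x; rewrite ?inE ?eqxx // => y /[1!inE] /predU1P [-> // | /zmax]; lia.
Qed.

Section Tree.
Variables (T : countType) (le : T -> T -> Prop).
Hypothesis tree : is_tree le.

Lemma levelP a : exists s : seq T,
  [/\ uniq s, forall b, b \in s <-> lt le b a & level le a = size s].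
Proof.
have [_ _ _ fin_pred _] := tree.
have [s0 hs0] := fin_pred a.
have ex : exists k s, [/\ uniq s, forall b, b \in s <-> lt le b a & size s = k].
  by exists (size (undup s0)), (undup s0); split=> // [|b]; rewrite ?undup_uniq ?mem_undup.
rewrite /level; have [s [us hs <-]] := epsilon_spec (inhabits 0) _ ex.
by exists s.
Qed.

Lemma level_uniq_pred a (s : seq T) :
  uniq s -> (forall b, b \in s <-> lt le b a) -> level le a = size s.
Proof.
move=> us hs; have [s' [us' hs' ->]] := levelP a.
apply/perm_size/uniq_perm => // x.
by apply/idP/idP => [/hs' /hs | /hs /hs'].
Qed.

Lemma lt_level a b : lt le a b -> level le a < level le b.
Proof.
move=> [le_ab ne_ab]; have [_ antisym trans _ _] := tree.
have [sa [usa hsa ->]] := levelP a; have [sb [usb hsb ->]] := levelP b.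
have a_notin : a \notin sa by apply/negP => /hsa [].
apply: (uniq_leq_size (s1 := a :: sa)); first by rewrite /= a_notin.
move=> x /[1!inE] /predU1P [-> | /hsa [le_xa ne_xa]]; apply/hsb; first by [].
split; first exact: trans le_ab.
by move=> exb; subst x; apply: ne_xa; apply: antisym.
Qed.

Lemma le_level a b : le a b -> level le a <= level le b.
Proof.
move=> le_ab; case: (eqVneq a b) => [-> // | /eqP ne_ab].
exact/ltnW/lt_level.
Qed.

Lemma le_level_inj a b : le a b -> level le a = level le b -> a = b.
Proof.
move=> le_ab eq_ab; case: (eqVneq a b) => // /eqP ne_ab.
by have := lt_level (conj le_ab ne_ab); rewrite eq_ab ltnn.
Qed.

Lemma imm_succ_level a b : imm_succ le a b -> level le b = (level le a).+1.
Proof.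
move=> [[le_ab ne_ab] no_mid]; have [_ antisym trans _ linear] := tree.
have [sa [usa hsa ->]] := levelP a.
have a_notin : a \notin sa by apply/negP => /hsa [].
apply: (level_uniq_pred (s := a :: sa)); first by rewrite /= a_notin.
move=> x; rewrite inE; split.
  move=> /predU1P [-> // | /hsa [le_xa ne_xa]]; split; first exact: trans le_ab.
  by move=> exb; subst x; apply: ne_xa; apply: antisym.
move=> lt_xb; apply/predU1P; case: (eqVneq x a) => [-> | /eqP ne_xa]; [by left | right].
apply/hsa; case: (linear b x a lt_xb (conj le_ab ne_ab)) => // le_ax.
by case: no_mid; exists x; split => //; split => // eax; apply: ne_xa.
Qed.

Lemma exists_parent a j : level le a = j.+1 ->
  exists2 b, imm_succ le b a & level le b = j.
Proof.
move=> la; have [s [us hs ls]] := levelP a.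
have s_ne : s != [::] by apply/eqP => s0; rewrite s0 in ls; rewrite ls in la.
have [b bs bmax] := seq_argmax (level le) s_ne.
have imm_ba : imm_succ le b a.
  split; first exact/hs.
  move=> [c [lt_bc lt_ca]]; have := bmax c (proj2 (hs c) lt_ca).
  by rewrite leqNgt lt_level.
by exists b => //; move: (imm_succ_level imm_ba); rewrite la => -[].
Qed.

Lemma level_downward a j : j <= level le a -> exists b, level le b = j.
Proof.
move=> le_ja; have [k lak] : exists k, level le a = k by eexists.
rewrite lak in le_ja; elim: k a lak le_ja => [|k IH] b lb le_jk.
  by exists b; rewrite lb; case: j le_jk.
case: (eqVneq j k.+1) => [-> | ne_jk]; first by exists b.
have [c _ lc] := exists_parent lb.
by apply: (IH c lc); rewrite -ltnS ltn_neqAle ne_jk le_jk.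
Qed.

End Tree.

Section Tilde.
Variables (T : countType) (le : T -> T -> Prop).

Lemma tilde_level F a :
  level_preserving le F -> tilde le F (level le a) = level le (F a).
Proof.
move=> lpF; rewrite /tilde.
have ex : exists k a', level le a' = level le a /\ level le (F a') = k.
  by exists (level le (F a)), a.
by have [a' [la' <-]] := epsilon_spec (inhabits 0) _ ex; apply: lpF.
Qed.

Hypothesis all_levels : forall j, exists a, level le a = j.

Lemma eq_tilde_upto F G N :
  level_preserving le F -> level_preserving le G ->
  (forall a, level le a <= N -> F a = G a) ->
  forall j, j <= N -> tilde le F j = tilde le G j.
Proof.
move=> lpF lpG agree j le_jN; have [a la] := all_levels j.
by rewrite -la !tilde_level // agree // la.
Qed.

Lemma in_tilde_imageP F l : in_tilde_image le F l <-> exists i, tilde le F i = l.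
Proof. by split=> [[i [_ fi]] | [i fi]]; exists i. Qed.

End Tilde.

Section ShapePreserving.
Variables (T : countType) (le : T -> T -> Prop).
Variables (Sigma : Type) (S : T -> seq T -> Sigma -> option T).
Hypothesis Stree : is_S_tree le S.
Let tree : is_tree le := proj1 Stree.

Lemma shape_preserving_id : shape_preserving le S id.
Proof.
have [refl _ _ _ _] := tree.
split=> // a p c b e; exists b.
by rewrite map_id.
Qed.

Lemma shape_preserving_succ F b p c a :
  shape_preserving le S F -> S b p c = Some a ->
  exists x, [/\ S (F b) (map F p) c = Some x, le x (F a)
              & level le x = (level le (F b)).+1].
Proof.
move=> [_ _ succF _] e; have [_ [_ _ S1 _ _]] := Stree.
have [x [ex le_x]] := succF _ _ _ _ e; exists x; split=> //.
by have [imm_x _] := S1 _ _ _ _ ex; apply: imm_succ_level.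
Qed.

Lemma shape_preserving_eq_upto F G n k :
  shape_preserving le S F -> shape_preserving le S G ->
  (forall a, level le a <= n -> F a = G a) ->
  (forall j, n <= j < k -> tilde le F j.+1 = (tilde le F j).+1) ->
  (forall j, n <= j < k -> tilde le G j.+1 = (tilde le G j).+1) ->
  forall a, level le a <= k -> F a = G a.
Proof.
move=> spF spG agree gapF gapG; have [_ [_ _ S1 _ S3]] := Stree.
have [_ lpF _ _] := spF; have [_ lpG _ _] := spG.
suff: forall j a, level le a = j -> j <= k -> F a = G a by move=> H a; apply: H.
elim/ltn_ind => j IH a la le_jk.
case: (leqP j n) => [le_jn | lt_nj]; first by apply: agree; rewrite la.
case: j IH la le_jk lt_nj => // j IH la lt_jk le_nj.
have [b imm_ba lb] := exists_parent tree la.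
have [p [c e]] := S3 _ _ imm_ba.
have eq_b : F b = G b by apply: (IH j) => //; apply: ltnW.
have eq_p : map F p = map G p.
  apply/eq_in_map => x xp; have [_ /(_ x xp) lx] := S1 _ _ _ _ e.
  rewrite lb in lx; apply: (IH (level le x)) => //; first exact: ltnW.
  exact: leq_trans (ltnW lx) (ltnW lt_jk).
have gap : n <= j < k by rewrite -ltnS le_nj.
have [x [ex le_x lx]] := shape_preserving_succ spF e.
have [y [ey le_y ly]] := shape_preserving_succ spG e.
have -> : F a = x.
  by apply/esym/(le_level_inj tree le_x); rewrite lx -!tilde_level // la lb gapF.
have -> : G a = y.
  by apply/esym/(le_level_inj tree le_y); rewrite ly -!tilde_level // la lb gapG.
by move: ex; rewrite eq_b eq_p ey => -[].
Qed.

Lemma shape_preserving_eq F G n :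
  shape_preserving le S F -> shape_preserving le S G ->
  (forall a, level le a <= n -> F a = G a) ->
  (forall j, n <= j -> tilde le F j.+1 = (tilde le F j).+1) ->
  (forall j, n <= j -> tilde le G j.+1 = (tilde le G j).+1) ->
  F = G.
Proof.
move=> spF spG agree gapF gapG; apply: functional_extensionality => a.
apply: (shape_preserving_eq_upto spF spG agree (k := level le a)) => //.
- by move=> j /andP [/gapF].
- by move=> j /andP [/gapG].
Qed.

Hypothesis all_levels : forall j, exists a, level le a = j.

Lemma tilde_shape_incr F :
  shape_preserving le S F -> forall j, tilde le F j < tilde le F j.+1.
Proof.
move=> spF j; have [_ lpF _ _] := spF; have [_ [_ _ _ _ S3]] := Stree.
have [a la] := all_levels j.+1; have [b imm_ba lb] := exists_parent tree la.
have [p [c e]] := S3 _ _ imm_ba.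
have [x [_ le_x lx]] := shape_preserving_succ spF e.
by rewrite -la -lb !tilde_level // -lx; apply: le_level.
Qed.

Lemma shape_preserving_id_below F m : shape_preserving le S F ->
  (forall j, j < m -> tilde le F j = j) ->
  forall a, level le a < m -> F a = a.
Proof.
move=> spF fixF a lt_am; have [_ lpF _ rootF] := spF.
have [refl _ _ _ _] := tree.
have [_ lp_id _ _] := shape_preserving_id.
have tilde_id j : tilde le id j = j.
  by have [b <-] := all_levels j; rewrite tilde_level.
have m_pos : 0 < m by apply: leq_ltn_trans lt_am.
apply: (shape_preserving_eq_upto spF shape_preserving_id (n := 0) (k := m.-1)).
- move=> b; rewrite leqn0 => /eqP lb; apply/esym/(le_level_inj tree (rootF b b lb (refl b))).
  by rewrite -tilde_level // lb fixF.
- move=> j /andP [_]; rewrite ltn_predRL => lt_jm.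
  by rewrite !fixF // ltnW.
- by move=> j _; rewrite !tilde_id.
- by rewrite -ltnS prednK.
Qed.

End ShapePreserving.

Section SMTree.
Variables (T : countType) (le : T -> T -> Prop).
Variables (Sigma : Type) (S : T -> seq T -> Sigma -> option T).
Variable M : (T -> T) -> Prop.
Hypothesis SMtree : is_SM_tree le S M.

Let Stree : is_S_tree le S. Proof. by case: SMtree. Qed.
Let M_shape F : M F -> shape_preserving le S F. Proof. by case: SMtree => _ + _ _ _; apply. Qed.
Let M_level F : M F -> level_preserving le F. Proof. by move/M_shape => []. Qed.

(* (M3) provides a map whose level image is cofinite; high levels are
   inhabited, and levels are closed downwards. *)
Lemma SM_all_levels j : exists a, level le a = j.
Proof.
have [_ _ _ _ M3] := SMtree.
have [F [MF onlyF _]] := M3 0 1 isT.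
have [k [[a la] tk]] : in_tilde_image le F j.+2 by apply/onlyF.
apply: (level_downward (proj1 Stree) (a := F a)).
by rewrite -(tilde_level a (M_level MF)) la tk leqW.
Qed.

Let all_levels := SM_all_levels.
Let M_incr F (MF : M F) := tilde_shape_incr Stree all_levels (M_shape MF).

Lemma M_close_gap_step G N : M G ->
  ((tilde le G N).+1 < tilde le G N.+1) ->
  exists2 G', M G' & (forall a, level le a <= N -> G' a = G a)
                     /\ tilde le G' N.+1 = (tilde le G N.+1).-1.
Proof.
move=> MG gap; have [_ _ _ M2 _] := SMtree.
set t := tilde le G N.+1 in gap *.
have t_pos : 0 < t by apply: leq_ltn_trans gap.
have skipG : skips le G t.-1.
  move=> /(in_tilde_imageP all_levels) [j tj].
  case: (leqP j N) => [le_jN | lt_Nj].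
  - by have := incr_leq (M_incr MG) le_jN; rewrite tj; move: gap; rewrite /t; lia.
  - by have := incr_leq (M_incr MG) lt_Nj; rewrite tj -/t; lia.
have [F1 [F2 [MF1 MF2 only2 comp]]] := M2 N.+1 G MG t_pos skipG.
have image2 l : (exists i, tilde le F2 i = l) <-> l <> t.-1.
  by rewrite -(in_tilde_imageP all_levels); apply: only2.
have id2 := shape_preserving_id_below Stree all_levels (M_shape MF2)
              (skip_only_below (M_incr MF2) image2).
exists F1 => //; split.
  move=> a le_aN; have le_aN1 := leqW le_aN.
  have lt_Ga : (level le (G a) < t.-1).
    rewrite -(tilde_level a (M_level MG)) ltn_predRL.
    by apply: leq_ltn_trans gap; rewrite ltnS (incr_leq (M_incr MG) le_aN).
  have lt_F1a : (level le (F1 a) < t.-1).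
    apply: leq_ltn_trans (leq_incr (M_incr MF2) _) _.
    by rewrite (tilde_level (F1 a) (M_level MF2)) comp.
  by rewrite -comp // id2.
have [a la] := all_levels N.+1.
apply: (skip_only_succ_inv (M_incr MF2) image2).
rewrite prednK // -la (tilde_level a (M_level MF1)) (tilde_level (F1 a) (M_level MF2)).
by rewrite comp ?la // -(tilde_level a (M_level MG)) la.
Qed.

Lemma M_close_gap G N : M G ->
  exists2 G', M G' & (forall a, level le a <= N -> G' a = G a)
                     /\ tilde le G' N.+1 = (tilde le G' N).+1.
Proof.
move=> MG; have [d] : exists d, tilde le G N.+1 = (tilde le G N + d.+1).
  by exists (tilde le G N.+1 - (tilde le G N).+1); rewrite addnS -addSn subnKC // M_incr.
elim: d G MG => [|d IH] G MG tG; first by exists G => //; rewrite tG addn1.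
have gap : ((tilde le G N).+1 < tilde le G N.+1) by rewrite tG; lia.
have [G1 MG1 [agree1 tG1]] := M_close_gap_step MG gap.
have tN : tilde le G1 N = tilde le G N.
  exact: (eq_tilde_upto all_levels (M_level MG1) (M_level MG) agree1 (leqnn N)).
have := IH G1 MG1; rewrite tG1 tN tG addnS => /(_ erefl) [G2 MG2 [agree2 tG2]].
by exists G2 => //; split=> // a la; rewrite agree2 ?agree1.
Qed.

Lemma M_gapless_extension F0 n : M F0 ->
  exists2 F, M F & (forall a, level le a <= n -> F a = F0 a)
    /\ forall j, n <= j -> tilde le F j.+1 = (tilde le F j).+1.
Proof.
move=> MF0; have [_ _ [_ _ M1] _ _] := SMtree.
pose closes N G G' := [/\ M G', forall a, level le a <= N -> G' a = G a
                        & tilde le G' N.+1 = (tilde le G' N).+1].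
pose next N G := epsilon (inhabits G) (closes N G).
have nextP N G : M G -> closes N G (next N G).
  by move=> MG; apply: epsilon_spec; have [G' ? []] := M_close_gap N MG; exists G'.
pose H := fix H i := if i is i'.+1 then next (n + i') (H i') else F0.
have MH i : M (H i) by elim: i => //= i /(nextP (n + i)) [].
have agreeH i a : level le a <= n + i -> H i.+1 a = H i a.
  by have [_ agree _] := nextP (n + i) _ (MH i); apply: agree.
have chain i a : level le a <= i -> H i a = H i.+1 a.
  by move=> la; rewrite agreeH // (leq_trans la) ?leq_addl.
have H_F0 i a : level le a <= n -> H i a = F0 a.
  by move=> la; elim: i => //= i <-; apply: agreeH; rewrite (leq_trans la) ?leq_addr.
have gapH i j : n <= j < n + i -> tilde le (H i) j.+1 = (tilde le (H i) j).+1.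
  elim: i => [|i IH] /andP [le_nj]; first by rewrite addn0 ltnNge le_nj.
  have [_ _ gap] := nextP (n + i) _ (MH i).
  rewrite addnS ltnS leq_eqVlt => /predU1P [-> // | lt_j].
  have eqt := eq_tilde_upto all_levels (M_level (MH i.+1)) (M_level (MH i)) (agreeH i).
  by rewrite !eqt ?IH ?le_nj // ltnW.
have [F [MF limF]] := M1 H MH chain.
exists F => //; split=> [a la | j le_nj]; first by rewrite (limF n) ?H_F0.
have eqt := eq_tilde_upto all_levels (M_level MF) (M_level (MH j.+1)) (limF j.+1).
by rewrite !eqt ?gapH ?le_nj ?leqnSn //; lia.
Qed.
End SMTree.

Theorem mainTheorem5 (T : countType) (le : T -> T -> Prop) (Sigma : Type)
    (S : T -> seq T -> Sigma -> option T) (M : (T -> T) -> Prop)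
    (HT : is_SM_tree le S M) (n : nat) (F0 : T -> T) (HF0 : M F0) :
  exists! Fp : T -> T,
    [/\ M Fp,
        (forall a : T, (level le a <= n)%N -> Fp a = F0 a)
      & (forall l : nat, (tilde le F0 n <= l)%N -> in_tilde_image le Fp l)].
Proof.
have [Stree M_shape _ _ _] := HT; have all_levels := SM_all_levels HT.
have M_level G : M G -> level_preserving le G by move/M_shape => [].
have tilde_n G : M G -> (forall a, level le a <= n -> G a = F0 a) ->
    tilde le G n = tilde le F0 n.
  by move=> MG agree; apply: (eq_tilde_upto all_levels (M_level G MG) (M_level F0 HF0) agree).
have [F MF [agreeF gapF]] := M_gapless_extension HT n HF0.
exists F; split.
  split=> // l; rewrite -(tilde_n F MF agreeF) => le_l.
  by apply/(in_tilde_imageP all_levels); apply: onto_of_succ gapF l le_l.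
move=> G [MG agreeG ontoG].
apply: (shape_preserving_eq Stree (M_shape F MF) (M_shape G MG) (n := n)) => //.
- by move=> a la; rewrite agreeF ?agreeG.
- apply: (incr_succ_of_onto (tilde_shape_incr Stree all_levels (M_shape G MG))).
  by move=> l; rewrite (tilde_n G MG agreeG) => /ontoG /(in_tilde_imageP all_levels).
Qed.
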